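(* Let $G$ be a strongly Deza graph with parameters $(n,k,b,a)$ having exactly four distinct eigenvalues $k,\theta_2,\theta_3,\theta_4$ with positive multiplicities $1,m_2,m_3,m_4$, where $\theta_4=-\theta_3$ and $m_3=m_4$. Then $m_2\theta_2=-k$, and one of the following holds: (i) $m_2=1$, $\theta_2=-k$, and $G$ is bipartite with spectrum consisting of $k$ (multiplicity $1$), $\sqrt{k(n-2k)/(n-2)}$ (multiplicity $(n-2)/2$), $-\sqrt{k(n-2k)/(n-2)}$ (multiplicity $(n-2)/2$), and $-k$ (multiplicity $1$); (ii) $m_2=k$, $\theta_2=-1$, and the spectrum of $G$ consists of $k$ (multiplicity $1$), $\sqrt{k}$ (multiplicity $(n-k-1)/2$), $-1$ (multiplicity $k$), and $-\sqrt{k}$ (multiplicity $(n-k-1)/2$); (iii) $m_2<k$ and $\theta_2<-1$.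
   Context: All graphs are finite, simple and undirected; eigenvalues of a graph are those of its adjacency matrix. A Deza graph with parameters $(n,k,b,a)$, where $b\geqslant a$, is a $k$-regular graph on $n$ vertices, which is neither complete nor edgeless, such that any two distinct vertices have exactly $b$ or exactly $a$ common neighbours. If $b>a$, the children $G_A$ and $G_B$ of $G$ are the graphs on the vertex set of $G$ in which two distinct vertices are adjacent if and only if they have exactly $a$ (for $G_A$), respectively exactly $b$ (for $G_B$), common neighbours in $G$; if $b=a$, $G_A$ is the complete graph and $G_B$ is the edgeless graph. A strongly regular graph with parameters $(n,k,\lambda,\mu)$ is a $k$-regular graph on $n$ vertices, neither complete nor edgeless, in which any two adjacent vertices have exactly $\lambda$ common neighbours and any two distinct non-adjacent vertices have exactly $\mu$ common neighbours (disconnected examples, i.e. disjoint unions of at least two cliques of equal size, are allowed). A strongly Deza graph is a Deza graph both of whose children are strongly regular graphs. *)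

From mathcomp Require Import all_boot all_order all_algebra.
Set Implicit Arguments. Unset Strict Implicit. Unset Printing Implicit Defensive.
Import Order.TTheory GRing.Theory Num.Theory.

Section Graphs.
Variable n : nat.

Definition simple_graph (g : rel 'I_n) : Prop :=
  symmetric g /\ irreflexive g.

Definition complete_graph (g : rel 'I_n) : Prop :=
  forall x y, x != y -> g x y.

Definition edgeless (g : rel 'I_n) : Prop := forall x y, ~~ g x y.

Definition regular (g : rel 'I_n) (k : nat) : Prop :=
  forall x, #|[set y | g x y]| = k.

Definition common_nb (g : rel 'I_n) (x y : 'I_n) : nat :=
  #|[set z | g x z && g y z]|.

Definition deza_graph (g : rel 'I_n) (k b a : nat) : Prop :=
  [/\ simple_graph g, regular g k, ~ complete_graph g /\ ~ edgeless g,
      (a <= b)%N &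
      forall x y, x != y -> common_nb g x y = b \/ common_nb g x y = a].

Definition childA (g : rel 'I_n) (b a : nat) : rel 'I_n :=
  fun x y => if (a < b)%N then (x != y) && (common_nb g x y == a) else x != y.

Definition childB (g : rel 'I_n) (b a : nat) : rel 'I_n :=
  fun x y => if (a < b)%N then (x != y) && (common_nb g x y == b) else false.

Definition srg (g : rel 'I_n) (k lam mu : nat) : Prop :=
  [/\ simple_graph g, regular g k, ~ complete_graph g /\ ~ edgeless g,
      (forall x y, x != y -> g x y -> common_nb g x y = lam) &
      (forall x y, x != y -> ~~ g x y -> common_nb g x y = mu)].

Definition strongly_regular (g : rel 'I_n) : Prop :=
  exists k lam mu, srg g k lam mu.

Definition strongly_deza (g : rel 'I_n) (k b a : nat) : Prop :=
  [/\ deza_graph g k b a, strongly_regular (childA g b a)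
    & strongly_regular (childB g b a)].

Definition bipartite (g : rel 'I_n) : Prop :=
  exists f : 'I_n -> bool, forall x y, g x y -> f x != f y.

Definition adjmx (R : nzRingType) (g : rel 'I_n) : 'M[R]_n :=
  (\matrix_(i, j) (g i j)%:R)%R.

End Graphs.

(* Only two features of the graph enter: its adjacency matrix A has integer
   entries, and A is the matrix of a simple k-regular graph, so that
   tr A = 0 and tr A^2 = n k.
   For the theorem, tr A = 0 gives m2 th2 = -k, so th2 = -k/m2 is a rational,
   hence integral, eigenvalue w with m2 w = -k.  Since th2 <> k, w < 0.  If
   w = -1 then m2 = k and tr A^2 = n k forces th3^2 = k, which is case (ii);
   otherwise w <= -2, so m2 < k and th2 < -1, which is case (iii). *)
From mathcomp Require Import all_boot all_order all_algebra all_field.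
From mathcomp Require Import ring zify.
Set Implicit Arguments. Unset Strict Implicit. Unset Printing Implicit Defensive.
Import Order.TTheory GRing.Theory Num.Theory.
Local Open Scope ring_scope.

(* Squaring a matrix squares its eigenvalues, at the level of characteristic
   polynomials: det (X^2 - M^2) = det (X - M) det (X + M). *)
Lemma char_poly_sqr (R : fieldType) n (M : 'M[R]_n) :
  char_poly (M *m M) \Po 'X^2 =
    (-1) ^+ n * (char_poly M * (char_poly M \Po - 'X)).
Proof.
rewrite /char_poly /char_poly_mx -det_map_mx.
set B := map_mx polyC M.
have -> : map_mx (comp_poly 'X^2) ('X%:M - map_mx polyC (M *m M))
   = ('X%:M - B) *m ('X%:M + B).
  rewrite mulmxDr !mulmxBl [B *m _]scalar_mxC addrA subrK -scalar_mxM -expr2.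
  rewrite map_mxB map_scalar_mx /= comp_polyX -map_mx_comp.
  congr (_ - _); rewrite -map_mxM; apply: eq_map_mx => x /=; exact: comp_polyC.
rewrite det_mulmx -det_map_mx map_mxB map_scalar_mx /= comp_polyX -map_mx_comp.
have -> : map_mx (comp_poly (- 'X) \o polyC) M = B.
  by apply: eq_map_mx => x /=; exact: comp_polyC.
have -> : (- 'X)%:M - B = (-1) *: ('X%:M + B) by rewrite scaleN1r opprD raddfN.
have sign_sqr : (-1) ^+ n * (-1) ^+ n = 1 :> {poly R}.
  by rewrite -exprD -signr_odd oddD addbb.
by rewrite detZ [X in _ = X]mulrCA [X in _ = _ * X]mulrA sign_sqr mul1r.
Qed.

Lemma prod_XsubC_sqr (R : fieldType) (s : seq R) :
  let p := \prod_(x <- s) ('X - x%:P) in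
  (-1) ^+ size s * (p * (p \Po - 'X)) = \prod_(x <- s) ('X - (x ^+ 2)%:P) \Po 'X^2.
Proof.
rewrite /=; elim: s => [|x t IH]; first by rewrite !big_nil !rmorph1 expr0 !mul1r.
rewrite !big_cons !comp_polyM -IH !comp_polyB comp_polyX !comp_polyC rmorphXn /=.
by rewrite comp_polyX exprS; ring.
Qed.

Lemma XsubC_XaddC_sqr (R : comNzRingType) (x y : R) m : x ^+ 2 = y ^+ 2 ->
  ('X - x%:P) ^+ m * ('X + x%:P) ^+ m = ('X - y%:P) ^+ m * ('X + y%:P) ^+ m.
Proof. by move=> xy; rewrite -!exprMn -!subr_sqr -!rmorphXn /= xy. Qed.

Section SplitCharPoly.
Variables (R : fieldType) (n : nat) (M : 'M[R]_n) (s : seq R).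
Hypothesis charM : char_poly M = \prod_(x <- s) ('X - x%:P).

Lemma size_eigenvalues : size s = n.
Proof. by have := size_char_poly M; rewrite charM size_prod_XsubC => -[]. Qed.

Lemma trace_eigenvalues : \tr M = \sum_(x <- s) x.
Proof.
case: n M charM size_eigenvalues => [|n'] M' charM' size_s.
  by case: s size_s => // _; rewrite /mxtrace big_ord0 big_nil.
have := char_poly_trace M' (ltn0Sn n'); rewrite charM' /=.
have := coefPn_prod_XsubC (ps := s); rewrite size_s /= => -> //.
by move/eqP; rewrite eqr_opp => /eqP.
Qed.

Lemma char_poly_sqr_eigenvalues :
  char_poly (M *m M) = \prod_(x <- s) ('X - (x ^+ 2)%:P).
Proof.
have := char_poly_sqr M.
rewrite charM -[X in (-1) ^+ X]size_eigenvalues prod_XsubC_sqr => E.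
apply/polyP => i; have := congr1 (fun p : {poly R} => p`_(i * 2)) E => /=.
by rewrite !coef_comp_poly_Xn // dvdn_mull // mulnK.
Qed.

End SplitCharPoly.

Lemma trace_sqr_eigenvalues (R : fieldType) n (M : 'M[R]_n) (s : seq R) :
  char_poly M = \prod_(x <- s) ('X - x%:P) ->
  \tr (M *m M) = \sum_(x <- s) x ^+ 2.
Proof.
move=> charM; rewrite -(big_map (fun x => x ^+ 2) xpredT idfun).
by apply: trace_eigenvalues; rewrite big_map (char_poly_sqr_eigenvalues charM).
Qed.

(* A rational root of a monic integer polynomial is an integer, since it is
   an algebraic integer. *)
Lemma rat_root_monic_int (R : numFieldType) (P : {poly int}) (z : rat) :
  P \is monic -> root (map_poly intr P : {poly R}) (ratr z) ->
  exists w : int, ratr z = w%:~R :> R.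
Proof.
have root_ratr (F : numFieldType) :
    root (map_poly intr P : {poly F}) (ratr z) = root (map_poly intr P) z.
  rewrite -(fmorph_root (ratr : {rmorphism rat -> F})) -map_poly_comp.
  by congr root; apply: eq_map_poly => x /=; rewrite ratr_int.
move=> monicP; rewrite root_ratr -(root_ratr algC) => rootP.
have z_Aint : (ratr z : algC) \in Aint.
  apply: root_monic_Aint rootP _ _; first exact: monic_map.
  by apply/polyOverP => i; rewrite coef_map /=; exact: rpred_int.
have /intrP [w zw] := Cint_rat_Aint (Crat_rat z) z_Aint.
exists w; suff -> : z = w%:~R by rewrite ratr_int.
apply: (fmorph_inj (ratr : {rmorphism rat -> algC})).
by rewrite /= zw ratr_int.
Qed.

Section AdjacencyMatrix.
Variables (n : nat) (g : rel 'I_n).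

Lemma adjmx_intr (R : nzRingType) : adjmx R g = map_mx intr (adjmx int g).
Proof. by apply/matrixP => i j; rewrite !mxE; case: (g i j). Qed.

Lemma adjmx_rat_eigenvalue_int (R : numFieldType) (z : rat) :
  root (char_poly (adjmx R g)) (ratr z) -> exists w : int, ratr z = w%:~R :> R.
Proof.
rewrite adjmx_intr -map_char_poly; apply: rat_root_monic_int.
exact: char_poly_monic.
Qed.

Hypothesis g_simple : simple_graph g.

Lemma adjmx_trace (R : nzRingType) : \tr (adjmx R g) = 0.
Proof.
by case: g_simple => _ irr; rewrite /mxtrace big1 // => i _; rewrite mxE irr.
Qed.

(* The diagonal entries of A^2 are the vertex degrees, all equal to k. *)
Lemma adjmx_trace_sqr (R : nzRingType) k :
  regular g k -> \tr (adjmx R g *m adjmx R g) = (n * k)%:R.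
Proof.
case: g_simple => sym _ reg.
have -> : (n * k)%:R = \sum_(i < n) (k%:R : R).
  by rewrite sumr_const card_ord -mulrnA mulnC.
apply: eq_bigr => i _; rewrite mxE -(reg i).
rewrite cardsE -sum1_card natr_sum [RHS]big_mkcond /=.
apply: eq_bigr => j _; rewrite !mxE (sym j i) unfold_in.
by case: (g i j); rewrite ?mulr1 ?mulr0.
Qed.

End AdjacencyMatrix.

Section FourEigenvalues.
Variables (R : rcfType) (n : nat) (g : rel 'I_n) (k : nat).
Variables (th2 th3 : R) (m2 m3 : nat).
Hypotheses (g_simple : simple_graph g) (g_regular : regular g k).
Hypothesis charA : char_poly (adjmx R g) =
  ('X - k%:R%:P) * ('X - th2%:P) ^+ m2 * ('X - th3%:P) ^+ m3
    * ('X - (- th3)%:P) ^+ m3.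

Let spectrum := k%:R :: nseq m2 th2 ++ nseq m3 th3 ++ nseq m3 (- th3).

Lemma charA_spectrum :
  char_poly (adjmx R g) = \prod_(x <- spectrum) ('X - x%:P).
Proof. by rewrite charA big_cons !big_cat !big_nseq !iter_mulr_1 !mulrA. Qed.

Lemma order_spectrum : n = (1 + m2 + m3 * 2)%N.
Proof.
by have := size_eigenvalues charA_spectrum; rewrite /= !size_cat !size_nseq; lia.
Qed.

(* From tr A = 0: the eigenvalues th3 and -th3 cancel. *)
Lemma mult_th2 : m2%:R * th2 = - k%:R.
Proof.
have := trace_eigenvalues charA_spectrum.
rewrite adjmx_trace // big_cons !big_cat !big_nseq !iter_addr_0 /= mulNrn subrr.
rewrite addr0 mulr_natl => /eqP; rewrite eq_sym addr_eq0 => /eqP ->.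
by rewrite opprK.
Qed.

Lemma sum_sqr_spectrum :
  k%:R ^+ 2 + th2 ^+ 2 *+ m2 + th3 ^+ 2 *+ (m3 * 2) = (n * k)%:R.
Proof.
rewrite -(adjmx_trace_sqr g_simple R g_regular).
rewrite (trace_sqr_eigenvalues charA_spectrum).
rewrite big_cons !big_cat !big_nseq !iter_addr_0 /= sqrrN.
by rewrite muln2 -addnn mulrnDr !addrA.
Qed.

(* th2 = -k / m2 is a rational eigenvalue, hence an integer. *)
Lemma th2_integer : (0 < m2)%N ->
  exists2 w : int, th2 = w%:~R & m2%:Z * w = - k%:Z.
Proof.
move=> m2_gt0.
have th2_ratr : th2 = ratr (- k%:R / m2%:R).
  rewrite fmorph_div rmorphN !rmorph_nat -mult_th2 mulrC mulKf //.
  by rewrite pnatr_eq0 -lt0n.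
have th2_root : root (char_poly (adjmx R g)) th2.
  by rewrite charA -(prednK m2_gt0) !rootM root_exp_XsubC eqxx /= orbT.
rewrite th2_ratr in th2_root *.
have [w wE] := adjmx_rat_eigenvalue_int th2_root; exists w => //.
apply: (@intr_inj R); rewrite intrM rmorphN /= -wE -th2_ratr.
exact: mult_th2.
Qed.

Lemma th3_sqr : (0 < m3)%N -> th2 = -1 -> m2 = k -> th3 ^+ 2 = k%:R.
Proof.
move=> m3_gt0 th2E m2E; apply/eqP; rewrite -subr_eq0.
have := sum_sqr_spectrum; rewrite [X in (X * k)%N]order_spectrum th2E m2E.
move=> /eqP; rewrite -subr_eq0 => /eqP sum0.
have : (m3 * 2)%:R * (th3 ^+ 2 - k%:R) = 0 :> R.
  by rewrite -[RHS]sum0 !natrM !natrD -mulr_natl; ring.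
by move/eqP; rewrite mulf_eq0 pnatr_eq0 muln_eq0 eqn0Ngt m3_gt0.
Qed.

End FourEigenvalues.

Theorem theorem8 (R : rcfType) (n : nat) (g : rel 'I_n) (k b a : nat)
  (th2 th3 th4 : R) (m2 m3 m4 : nat) :
  strongly_deza g k b a ->
  uniq [:: k%:R; th2; th3; th4] ->
  (0 < m2)%N -> (0 < m3)%N -> (0 < m4)%N ->
  char_poly (adjmx R g) =
    ('X - k%:R%:P) * ('X - th2%:P) ^+ m2 * ('X - th3%:P) ^+ m3
      * ('X - th4%:P) ^+ m4 ->
  th4 = - th3 -> m3 = m4 ->
  m2%:R * th2 = - k%:R /\
  [\/ [/\ m2 = 1%N, th2 = - k%:R, bipartite g &
        exists2 m : nat, (m * 2 = n - 2)%N &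
          let s := Num.sqrt (k%:R * (n%:R - 2 * k%:R) / (n%:R - 2)) in
          char_poly (adjmx R g) =
            ('X - k%:R%:P) * ('X - s%:P) ^+ m * ('X + s%:P) ^+ m
              * ('X + k%:R%:P)],
      [/\ m2 = k, th2 = -1 &
        exists2 m : nat, (m * 2 = n - k - 1)%N &
          char_poly (adjmx R g) =
            ('X - k%:R%:P) * ('X - (Num.sqrt k%:R)%:P) ^+ m
              * ('X + 1) ^+ k * ('X + (Num.sqrt k%:R)%:P) ^+ m]
    | (m2 < k)%N /\ th2 < -1].
Proof.
move=> [[g_simple g_regular _ _ _] _ _] uniq_spec m2_gt0 m3_gt0 _ charA th4E m4E.
subst th4 m4; split; first exact: mult_th2 charA.
have [w th2E m2w] := th2_integer g_simple charA m2_gt0.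
have th2_neq_k : th2 != k%:R.
  by case/and4P: uniq_spec; rewrite !inE eq_sym => /norP[].
(* The integer eigenvalue w = -k/m2 is negative, being distinct from k. *)
have w_lt0 : w < 0.
  rewrite ltNge; apply: contra th2_neq_k => w_ge0; apply/eqP.
  have [w0 k0] : w = 0 /\ k = 0%N by nia.
  by rewrite th2E w0 k0.
have [w_m1|w_le] : w = -1 \/ w <= -2 by lia.
- have m2E : m2 = k by lia.
  have th2_m1 : th2 = -1 by rewrite th2E w_m1.
  have th3_sq := th3_sqr g_simple g_regular charA m3_gt0 th2_m1 m2E.
  apply: Or32; split => //; exists m3; first by rewrite (order_spectrum charA); lia.
  rewrite charA th2_m1 m2E !polyCN !opprK polyC1 -!mulrA; congr (_ * _).
  rewrite (@XsubC_XaddC_sqr _ th3 (Num.sqrt k%:R)) ?sqr_sqrtr ?ler0n //.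
  by rewrite mulrCA.
- apply: Or33; split; first nia.
  by rewrite th2E -(rmorphN1 (intr : int -> R)) ltr_int; lia.
Qed.
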